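(* Let $N,Q,S\ge 1$ be integers, let $\mathbf{H}\in\mathbb{R}^{Q\times N}$ with $\mathbf{H}\neq\mathbf{0}$, $\mathbf{y}\in\mathbb{R}^Q$, let $\mathbf{V}_0$ be a real matrix with $N$ columns, and for each $s\in\{1,\dots,S\}$ let $P_s\ge1$, $\mathbf{V}_s\in\mathbb{R}^{P_s\times N}$ and $\mathbf{c}_s\in\mathbb{R}^{P_s}$. Let $\Phi:\mathbb{R}^Q\to\mathbb{R}$ and, for every $\delta>0$ and $s\in\{1,\dots,S\}$, $\psi_{s,\delta}:\mathbb{R}\to\mathbb{R}$. For $\delta>0$ define $$F_\delta(\mathbf{x})=\Phi(\mathbf{H}\mathbf{x}-\mathbf{y})+\sum_{s=1}^S\psi_{s,\delta}(\|\mathbf{V}_s\mathbf{x}-\mathbf{c}_s\|)+\|\mathbf{V}_0\mathbf{x}\|^2,\qquad \mathbf{x}\in\mathbb{R}^N.$$ Assume: (a) $\Phi$ is continuous and coercive; (b) for every $\delta>0$ and $s$, $\psi_{s,\delta}$ is continuous and nonnegative; (c) $\operatorname{Ker}\mathbf{H}\cap\operatorname{Ker}\mathbf{V}_0=\{\mathbf{0}\}$; (d) for every $s$ and all $0<\delta_1\le\delta_2$, $\psi_{s,\delta_1}(t)\ge\psi_{s,\delta_2}(t)$ for all $t\in\mathbb{R}$; (e) there exists $\lambda>0$ such that for every $s$ and every $t\in\mathbb{R}$, $\lim_{\delta\to0,\,\delta>0}\psi_{s,\delta}(t)=\lambda\chi_{\mathbb{R}\setminus\{0\}}(t)$, where $\chi_{\mathbb{R}\setminus\{0\}}(t)=0$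 if $t=0$ and $1$ otherwise. Define $$F_0(\mathbf{x})=\Phi(\mathbf{H}\mathbf{x}-\mathbf{y})+\lambda\,\ell_0(\mathbf{V}\mathbf{x}-\mathbf{c})+\|\mathbf{V}_0\mathbf{x}\|^2,$$ where $\mathbf{V}=[\mathbf{V}_1^\top|\cdots|\mathbf{V}_S^\top]^\top$, $\mathbf{c}=[\mathbf{c}_1^\top,\dots,\mathbf{c}_S^\top]^\top$, and for $\mathbf{t}=[\mathbf{t}_1^\top,\dots,\mathbf{t}_S^\top]^\top$ with $\mathbf{t}_s\in\mathbb{R}^{P_s}$, $\ell_0(\mathbf{t})=\sum_{s=1}^S\chi_{\mathbb{R}\setminus\{0\}}(\|\mathbf{t}_s\|)$. Let $(\delta_n)_{n\in\mathbb{N}}$ be a decreasing sequence of positive reals converging to $0$. Then: (i) $\inf F_{\delta_n}\to\inf F_0$ as $n\to+\infty$; (ii) if for every $n$, $\hat{\mathbf{x}}_n$ is a minimizer of $F_{\delta_n}$, then $(\hat{\mathbf{x}}_n)_{n\in\mathbb{N}}$ is bounded and all its cluster points are minimizers of $F_0$; (iii) if $F_0$ has a unique minimizer $\tilde{\mathbf{x}}$, then $\hat{\mathbf{x}}_n\to\tilde{\mathbf{x}}$ as $n\to+\infty$.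
   Context: $\|\cdot\|$ denotes the Euclidean norm. *)

From HB Require Import structures.
From mathcomp Require Import all_boot all_order all_algebra.
From mathcomp Require Import all_classical all_reals all_analysis.
Set Implicit Arguments. Unset Strict Implicit. Unset Printing Implicit Defensive.
Import Order.TTheory GRing.Theory Num.Theory.
Import numFieldNormedType.Exports.
Local Open Scope ring_scope.
Local Open Scope classical_set_scope.

Definition enorm (R : realType) (n : nat) (v : 'cV[R]_n) : R :=
  Num.sqrt (\sum_(i < n) (v i 0) ^+ 2).

Definition chi_nz (R : realType) (t : R) : R := if t == 0 then 0 else 1.

Definition coercive (R : realType) (n : nat) (f : 'cV[R]_n -> R) : Prop :=
  forall M : R, exists r : R, forall z, r <= enorm z -> M <= f z.

Definition is_minimizer (R : realType) (n : nat) (f : 'cV[R]_n -> R) (x : 'cV[R]_n) : Prop :=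
  forall z, f x <= f z.

Definition inf_fun (R : realType) (n : nat) (f : 'cV[R]_n -> R) : R :=
  inf (range f).

Definition F_delta (R : realType) (N Q S : nat) (P : 'I_S -> nat) (M0 : nat)
  (Phi : 'cV[R]_Q -> R) (H : 'M[R]_(Q, N)) (y : 'cV[R]_Q) (V0 : 'M[R]_(M0, N))
  (V : forall s : 'I_S, 'M[R]_(P s, N)) (c : forall s : 'I_S, 'cV[R]_(P s))
  (psi : 'I_S -> R -> R -> R) (delta : R) (x : 'cV[R]_N) : R :=
  Phi (H *m x - y) + \sum_(s < S) psi s delta (enorm (V s *m x - c s))
  + enorm (V0 *m x) ^+ 2.

(* F_0, with lambda * l0(Vx - c) written blockwise *)
Definition F_zero (R : realType) (N Q S : nat) (P : 'I_S -> nat) (M0 : nat)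
  (Phi : 'cV[R]_Q -> R) (H : 'M[R]_(Q, N)) (y : 'cV[R]_Q) (V0 : 'M[R]_(M0, N))
  (V : forall s : 'I_S, 'M[R]_(P s, N)) (c : forall s : 'I_S, 'cV[R]_(P s))
  (lambda : R) (x : 'cV[R]_N) : R :=
  Phi (H *m x - y) + lambda * (\sum_(s < S) chi_nz (enorm (V s *m x - c s)))
  + enorm (V0 *m x) ^+ 2.

From HB Require Import structures.
From mathcomp Require Import all_boot all_order all_algebra.
From mathcomp Require Import all_classical all_reals all_analysis.
From mathcomp Require Import lra.
Set Implicit Arguments. Unset Strict Implicit. Unset Printing Implicit Defensive.
Import Order.TTheory GRing.Theory Num.Theory.
Import numFieldNormedType.Exports.
Local Open Scope ring_scope.
Local Open Scope classical_set_scope.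

(* The criteria [F_delta] increase pointwise to [F_zero] as [delta] decreases to 0, and
   all of them dominate [Phi (H x - y) + |V0 x|^2], which is coercive because [Ker H] and
   [Ker V0] meet only at 0; hence minimizers of [F_(delta_k)] stay in a fixed ball.  If
   [x] is a cluster point of a sequence with [F_(delta_k) x_k <= C], continuity of each
   fixed [F_(delta_m)] and monotonicity give [F_(delta_m) x <= C], and letting [m] grow
   gives [F_zero x <= C].  This lower bound makes every cluster point of minimizers a
   minimizer of [F_zero], forces [inf F_(delta_k)] to increase to [inf F_zero], and,
   with compactness, gives convergence when the minimizer of [F_zero] is unique. *)

Section EuclideanNorm.
Variables (R : realType) (n : nat).
Implicit Types (u v : 'cV[R]_n) (k : R).

Definition enorm2 v : R := \sum_(i < n) v i 0 ^+ 2.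

Lemma enorm2_ge0 v : 0 <= enorm2 v.
Proof. by apply: sumr_ge0 => i _; exact: sqr_ge0. Qed.

Lemma enorm_ge0 v : 0 <= enorm v.
Proof. exact: sqrtr_ge0. Qed.

Lemma sqr_enorm v : enorm v ^+ 2 = enorm2 v.
Proof. by rewrite sqr_sqrtr // enorm2_ge0. Qed.

Lemma enorm2_eq0 v : (enorm2 v == 0) = (v == 0).
Proof.
rewrite psumr_eq0 => [|i _]; last exact: sqr_ge0.
apply/allP/eqP => [v0|-> i _]; last by rewrite mxE expr0n eqxx.
apply/matrixP => i j; rewrite ord1 mxE; apply/eqP.
by have := v0 i (mem_index_enum i); rewrite /= sqrf_eq0.
Qed.

Lemma enorm20 : enorm2 (0 : 'cV[R]_n) = 0.
Proof. by apply/eqP; rewrite enorm2_eq0. Qed.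

Lemma enorm2Z k v : enorm2 (k *: v) = k ^+ 2 * enorm2 v.
Proof. by rewrite /enorm2 mulr_sumr; apply: eq_bigr => i _; rewrite mxE exprMn. Qed.

Lemma enorm2D_le u v : enorm2 (u + v) <= 2 * enorm2 u + 2 * enorm2 v.
Proof.
rewrite /enorm2 !mulr_sumr -big_split /=; apply: ler_sum => i _; rewrite mxE.
have := sqr_ge0 (u i 0 - v i 0); nra.
Qed.

Lemma normr_le_enorm v i : `|v i 0| <= enorm v.
Proof.
rewrite -sqrtr_sqr ler_sqrt ?enorm2_ge0 // /enorm2 (bigD1 i) //= lerDl.
by apply: sumr_ge0 => j _; exact: sqr_ge0.
Qed.

Lemma enorm2_continuous : continuous enorm2.
Proof.
apply: continuous_big => [|i _ v]; first exact: add_continuous.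
apply: (@continuous_comp _ _ _ (fun x : 'cV[R]_n => x i 0) (fun t : R => t ^+ 2)).
  exact: coord_continuous.
exact: exprn_continuous.
Qed.

Lemma enorm_continuous : continuous (@enorm R n).
Proof.
by move=> v; apply: continuous_comp; [exact: enorm2_continuous|exact: sqrt_continuous].
Qed.

End EuclideanNorm.

Lemma mx_continuous (T : topologicalType) (R : realType) m n (f : T -> 'M[R]_(m, n)) :
  (forall i j, continuous (fun x => f x i j)) -> continuous f.
Proof.
move=> f_cont x; apply/cvg_ballP => e e_gt0.
have : \forall z \near x, forall ij : 'I_m * 'I_n, ball (f x ij.1 ij.2) e (f z ij.1 ij.2).
  by apply: filter_forall => -[i j]; exact: (cvg_ball (f_cont i j x)).
by apply: filterS => z fz; split => // i j; exact: (fz (i, j)).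
Qed.

Lemma mulmx_continuous (R : realType) m n p (A : 'M[R]_(m, n)) :
  continuous (fun x : 'M[R]_(n, p) => A *m x).
Proof.
apply: mx_continuous => i j; under eq_fun do rewrite mxE.
apply: continuous_big => [|k _ x]; first exact: add_continuous.
by apply: continuousM; [exact: cst_continuous|exact: coord_continuous].
Qed.

Lemma affine_continuous (R : realType) m n p (A : 'M[R]_(m, n)) (b : 'M[R]_(m, p)) :
  continuous (fun x : 'M[R]_(n, p) => A *m x - b).
Proof. by move=> x; apply: continuousB; [exact: mulmx_continuous|exact: cst_continuous]. Qed.

Lemma sublevel_closed (T : topologicalType) (R : realType) (f : T -> R) (C : R) :
  continuous f -> closed [set x | f x <= C].
Proof.
move=> f_cont; apply: (@preimage_closed _ _ f [set t | t <= C]); last exact: closed_le.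
by move=> x _; exact: f_cont.
Qed.

Lemma cluster_sublevel (T : topologicalType) (R : realType) (f : T -> R) (C : R)
    (u : nat -> T) x :
  continuous f -> cluster (u @ \oo) x -> (\forall k \near \oo, f (u k) <= C) ->
  f x <= C.
Proof.
move=> f_cont ux fuC.
have : closure [set x | f x <= C] x by move=> B xB; exact: ux _ _ fuC xB.
by rewrite -(closure_id _).1 //; exact: sublevel_closed.
Qed.

Lemma enorm_le_compact (R : realType) n (r : R) :
  compact [set v : 'cV[R]_n | enorm v <= r].
Proof.
set cube := [set w : 'rV[R]_n | forall i, `[-r, r]%classic (w ord0 i)].
have cube_compact : compact cube.
  by apply: (@rV_compact _ n (fun=> `[-r, r]%classic)) => i; exact: segment_compact.
have image_compact : compact ((fun w : 'rV[R]_n => w^T) @` cube).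
  apply: continuous_compact => //; apply: continuous_subspaceT.
  by apply: mx_continuous => i j w; under eq_fun do rewrite mxE; exact: coord_continuous.
apply: subclosed_compact image_compact _; first exact/sublevel_closed/enorm_continuous.
move=> v vr; exists v^T; last by rewrite trmxK.
move=> i; rewrite mxE /= in_itv /= -ler_norml.
exact: le_trans (normr_le_enorm v i) vr.
Qed.

Lemma bounded_seq_cluster (R : realType) n (u : nat -> 'cV[R]_n) (r : R) :
  (forall k, enorm (u k) <= r) -> exists x, cluster (u @ \oo) x.
Proof.
move=> ur; have : (u @ \oo) [set v | enorm v <= r] by apply: (@filterE _ (\oo : set_system nat)).
by move=> /enorm_le_compact[x [_ ux]]; exists x.
Qed.

Definition level_bounded (R : realType) n (f : 'cV[R]_n -> R) : Prop :=
  forall M, exists r, forall x, f x <= M -> enorm x <= r.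

Section LevelBounded.
Variables (R : realType) (n : nat).
Implicit Types f g : 'cV[R]_n -> R.

Lemma coercive_level_bounded f : coercive f -> level_bounded f.
Proof.
move=> f_coer M; have [r fr] := f_coer (M + 1); exists r => x fxM.
by rewrite leNgt; apply/negP => /ltW /fr; lra.
Qed.

Lemma level_bounded_le f g :
  (forall x, g x <= f x) -> level_bounded g -> level_bounded f.
Proof. by move=> gf g_lb M; have [r gr] := g_lb M; exists r => x /(le_trans (gf x)) /gr. Qed.

Lemma level_bounded_minimizer f :
  continuous f -> level_bounded f -> exists x, is_minimizer f x.
Proof.
move=> f_cont f_lb; have [r fr] := f_lb (f 0).
have ball_neq0 : [set v : 'cV[R]_n | enorm v <= r] !=set0 by exists 0; exact: fr.
have [c _ c_min] := compact_EVT_min ball_neq0 (@enorm_le_compact R n r)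
  (continuous_subspaceT f_cont).
exists c => z; have [zr|zr] := lerP (enorm z) r; first by apply: c_min; rewrite inE.
apply: le_trans (c_min 0 _) _; first by rewrite inE; exact: fr.
by rewrite leNgt; apply/negP => /ltW /fr; lra.
Qed.

End LevelBounded.

Lemma enorm2_normalize (R : realType) n (x : 'cV[R]_n) :
  x != 0 -> enorm2 ((enorm x)^-1 *: x) = 1.
Proof.
rewrite -enorm2_eq0 -sqr_enorm sqrf_eq0 => x_neq0.
by rewrite enorm2Z -sqr_enorm exprVn mulVf // sqrf_eq0.
Qed.

Lemma enorm2_mulmx_lbound (R : realType) m1 m2 n (A : 'M[R]_(m1, n)) (B : 'M[R]_(m2, n)) :
  (forall x : 'cV[R]_n, A *m x = 0 -> B *m x = 0 -> x = 0) ->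
  exists2 k, 0 < k & forall x : 'cV[R]_n, k * enorm2 x <= enorm2 (A *m x) + enorm2 (B *m x).
Proof.
move=> AB_inj; pose q (x : 'cV[R]_n) := enorm2 (A *m x) + enorm2 (B *m x).
have q_ge0 x : 0 <= q x by rewrite addr_ge0 ?enorm2_ge0.
have [[x0 x0_neq0]|all0] := pselect (exists x : 'cV[R]_n, x != 0); last first.
  exists 1 => // x; suff -> : x = 0 by rewrite enorm20 mul1r; apply: q_ge0.
  by apply: contrapT => x_neq0; apply: all0; exists x; apply/eqP.
pose sphere := [set x : 'cV[R]_n | enorm2 x = 1].
have sphere_neq0 : sphere !=set0 by exists ((enorm x0)^-1 *: x0); exact: enorm2_normalize.
have sphere_compact : compact sphere.
  apply: subclosed_compact (@enorm_le_compact R n 1) _.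
    apply: (preimage_closed _ (@closed_eq _ 1)) => x _; exact: enorm2_continuous.
  by move=> x /= x1; rewrite /enorm -/(enorm2 x) x1 sqrtr1.
have q_cont : continuous q.
  have enorm2_mulmx_cont m (C : 'M[R]_(m, n)) : continuous (fun x => enorm2 (C *m x)).
    by move=> x; apply: continuous_comp; [exact: mulmx_continuous|exact: enorm2_continuous].
  by move=> x; apply: (continuousD (enorm2_mulmx_cont _ A x) (enorm2_mulmx_cont _ B x)).
have [c /set_mem c1 c_min] :=
  compact_EVT_min sphere_neq0 sphere_compact (continuous_subspaceT q_cont).
exists (q c) => [|x].
  rewrite lt_def q_ge0 andbT paddr_eq0 ?enorm2_ge0 // !enorm2_eq0.
  apply/negP => /andP[/eqP Ac /eqP Bc].
  by move: c1; rewrite /sphere /= (AB_inj c Ac Bc) enorm20 => /eqP; rewrite eq_sym oner_eq0.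
have [->|x_neq0] := eqVneq x 0; first by rewrite enorm20 mulr0; apply: q_ge0.
have [w w1 ->] : exists2 w, enorm2 w = 1 & x = enorm x *: w.
  exists ((enorm x)^-1 *: x); first exact: enorm2_normalize.
  by rewrite scalerA mulfV ?scale1r // -sqrf_eq0 sqr_enorm enorm2_eq0.
rewrite -!scalemxAr !enorm2Z w1 mulr1 -mulrDr mulrC.
by rewrite ler_wpM2l ?sqr_ge0 // c_min // inE.
Qed.

Lemma fidelity_level_bounded (R : realType) N Q M0 (Phi : 'cV[R]_Q -> R)
    (H : 'M[R]_(Q, N)) (y : 'cV[R]_Q) (V0 : 'M[R]_(M0, N)) :
  continuous Phi -> coercive Phi ->
  (forall x : 'cV[R]_N, H *m x = 0 -> V0 *m x = 0 -> x = 0) ->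
  level_bounded (fun x => Phi (H *m x - y) + enorm (V0 *m x) ^+ 2).
Proof.
move=> Phi_cont Phi_coer HV0_inj M.
have Phi_lb := coercive_level_bounded Phi_coer.
have [z0 z0_min] := level_bounded_minimizer Phi_cont Phi_lb.
have [r Phi_r] := Phi_lb M.
have [k k_gt0 k_le] := enorm2_mulmx_lbound HV0_inj.
exists (Num.sqrt ((2 * r ^+ 2 + 2 * enorm2 y + (M - Phi z0)) / k)) => x.
rewrite sqr_enorm => xM.
have V0x_le : enorm2 (V0 *m x) <= M - Phi z0 by have := z0_min (H *m x - y); lra.
have Hxy_le : enorm (H *m x - y) <= r by apply: Phi_r; have := enorm2_ge0 (V0 *m x); lra.
have Hx_le : enorm2 (H *m x) <= 2 * r ^+ 2 + 2 * enorm2 y.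
  have := enorm2D_le (H *m x - y) y; rewrite subrK -[enorm2 (H *m x - y)]sqr_enorm.
  have := enorm_ge0 (H *m x - y); nra.
have C_ge0 : 0 <= 2 * r ^+ 2 + 2 * enorm2 y + (M - Phi z0).
  by have := enorm2_ge0 (V0 *m x); have := sqr_ge0 r; have := enorm2_ge0 y; lra.
rewrite /enorm -/(enorm2 x) ler_sqrt; last by rewrite divr_ge0 // ltW.
rewrite ler_pdivlMr // mulrC.
by have := k_le x; lra.
Qed.

Lemma le_inf_fun (R : realType) n (f : 'cV[R]_n -> R) b :
  (forall x, b <= f x) -> b <= inf_fun f.
Proof. by move=> bf; apply: lb_le_inf; [exists (f 0), 0 | move=> _ [z _ <-]]. Qed.

Lemma inf_fun_minimizer (R : realType) n (f : 'cV[R]_n -> R) x :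
  is_minimizer f x -> inf_fun f = f x.
Proof.
move=> x_min; apply/eqP; rewrite eq_le le_inf_fun // andbT.
by apply: ge_inf; [exists (f x) => _ [z _ <-]; exact: x_min | exists x].
Qed.

Section MonotoneApproximation.
Unset Implicit Arguments.
Context {R : realType} {n : nat} {f : nat -> 'cV[R]_n -> R} {g : 'cV[R]_n -> R}.
Hypothesis f_cont : forall k, continuous (f k).
Hypothesis f_nondecr : forall x, nondecreasing_seq (f^~ x).
Hypothesis f_cvg : forall x, f k x @[k --> \oo] --> g x.
Hypothesis f0_level_bounded : level_bounded (f 0).

Lemma le_pointwise_lim k x : f k x <= g x.
Proof.
apply: (ler_cvg_to (cvg_cst (f k x)) (f_cvg x)).
by apply: filterS (nbhs_infty_ge k) => m; exact: f_nondecr.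
Qed.

Lemma minimizer_exists k : exists x, is_minimizer (f k) x.
Proof.
apply: level_bounded_minimizer (f_cont k) _.
exact: level_bounded_le (fun x => f_nondecr x _ _ (leq0n k)) f0_level_bounded.
Qed.

Lemma cluster_lim_le (u : nat -> 'cV[R]_n) x C :
  cluster (u @ \oo) x -> (forall k, f k (u k) <= C) -> g x <= C.
Proof.
move=> ux fuC; apply: (ler_cvg_to (f_cvg x) (cvg_cst C)); apply: nearW => m.
apply: (cluster_sublevel (f_cont m) ux); apply: filterS (nbhs_infty_ge m) => k mk.
exact: le_trans (f_nondecr (u k) _ _ mk) (fuC k).
Qed.

Section Minimizers.
Variable xhat : nat -> 'cV[R]_n.
Hypothesis xhat_min : forall k, is_minimizer (f k) (xhat k).

Lemma minimizers_bounded : exists B, forall k, enorm (xhat k) <= B.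
Proof.
have [B fB] := f0_level_bounded (g 0); exists B => k; apply: fB.
exact: le_trans (f_nondecr _ _ _ (leq0n k)) (le_trans (xhat_min k 0) (le_pointwise_lim k 0)).
Qed.

Lemma cluster_minimizer x : cluster (xhat @ \oo) x -> is_minimizer g x.
Proof.
move=> xhat_x z; apply: cluster_lim_le xhat_x _ => k.
exact: le_trans (xhat_min k z) (le_pointwise_lim k z).
Qed.

Lemma minimizers_cluster : exists x, cluster (xhat @ \oo) x.
Proof. by have [B xhatB] := minimizers_bounded; exact: bounded_seq_cluster xhatB. Qed.

Lemma inf_fun_minimizers_cvg : inf_fun (f k) @[k --> \oo] --> inf_fun g.
Proof.
pose m k := f k (xhat k).
under eq_fun do rewrite (inf_fun_minimizer (xhat_min _)); rewrite -/m.
have m_le k : m k <= inf_fun g.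
  by apply: le_inf_fun => z; exact: le_trans (xhat_min k z) (le_pointwise_lim k z).
have m_nondecr : nondecreasing_seq m.
  by move=> k k' kk'; exact: le_trans (xhat_min k (xhat k')) (f_nondecr _ _ _ kk').
have m_sup : has_sup (range m) by split; [exists (m 0%N), 0%N | exists (inf_fun g) => _ [k _ <-]].
suff <- : sup (range m) = inf_fun g by exact: nondecreasing_cvgn m_nondecr m_sup.2.
apply/eqP; rewrite eq_le; apply/andP; split.
  by apply: sup_le_ub m_sup.1 _ => _ [k _ <-].
have [x xhat_x] := minimizers_cluster.
rewrite (inf_fun_minimizer (cluster_minimizer _ xhat_x)).
by apply: cluster_lim_le xhat_x _ => k; apply: sup_upper_bound m_sup _ _; exists k.
Qed.

Lemma minimizers_cvg xt : is_minimizer g xt -> (forall z, is_minimizer g z -> z = xt) ->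
  xhat @ \oo --> xt.
Proof.
move=> xt_min xt_unique; have [B xhatB] := minimizers_bounded.
have cluster_xt : cluster (xhat @ \oo) = [set xt].
  apply/seteqP; split => [x /cluster_minimizer/xt_unique -> //|_ ->].
  by have [x xhat_x] := minimizers_cluster; rewrite -(xt_unique x (cluster_minimizer _ xhat_x)).
have B_ge0 : 0 <= B := le_trans (enorm_ge0 _) (xhatB 0%N).
apply: (@compact_cluster_set1 _ xt _ [set z | enorm z <= B + enorm xt + 1]) => //.
- exact: enorm_le_compact.
- by apply: (cvgr_le _ (@enorm_continuous R n xt)); lra.
- apply: (@filterE _ (\oo : set_system nat)) => k /=.
  by have := xhatB k; have := enorm_ge0 xt; lra.
Qed.

End Minimizers.

Lemma inf_fun_cvg : inf_fun (f k) @[k --> \oo] --> inf_fun g.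
Proof.
have [xhat xhat_min] := choice minimizer_exists.
exact: inf_fun_minimizers_cvg xhat_min.
Qed.

End MonotoneApproximation.

Section RegularizedCriteria.
Context {R : realType} {N Q S : nat} {P : 'I_S -> nat} {M0 : nat}.
Variables (Phi : 'cV[R]_Q -> R) (H : 'M[R]_(Q, N)) (y : 'cV[R]_Q) (V0 : 'M[R]_(M0, N))
  (V : forall s : 'I_S, 'M[R]_(P s, N)) (c : forall s : 'I_S, 'cV[R]_(P s))
  (psi : 'I_S -> R -> R -> R).

Local Notation F := (@F_delta R N Q S P M0 Phi H y V0 V c psi).

Lemma F_delta_continuous d :
  continuous Phi -> (forall s, continuous (psi s d)) -> continuous (F d).
Proof.
move=> Phi_cont psi_cont.
have fidelity_cont : continuous (fun x => Phi (H *m x - y)).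
  by move=> x; apply: continuous_comp; [exact: affine_continuous|exact: Phi_cont].
have penalty_cont : continuous (fun x => \sum_s psi s d (enorm (V s *m x - c s))).
  apply: continuous_big => [|s _ x]; first exact: add_continuous.
  apply: continuous_comp; last exact: psi_cont.
  by apply: continuous_comp; [exact: affine_continuous|exact: enorm_continuous].
have quadratic_cont : continuous (fun x => enorm (V0 *m x) ^+ 2).
  move=> x; apply: (@continuous_comp _ _ _ (fun x => enorm (V0 *m x)) (fun t : R => t ^+ 2)).
    by apply: continuous_comp; [exact: mulmx_continuous|exact: enorm_continuous].
  exact: exprn_continuous.
by move=> x; apply: continuousD (continuousD (fidelity_cont x) (penalty_cont x)) (quadratic_cont x).
Qed.

Lemma fidelity_le_F_delta d x : (forall s t, 0 <= psi s d t) ->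
  Phi (H *m x - y) + enorm (V0 *m x) ^+ 2 <= F d x.
Proof. by move=> psi_ge0; rewrite lerD2r lerDl sumr_ge0. Qed.

Lemma F_delta_le d1 d2 x : (forall s t, psi s d2 t <= psi s d1 t) -> F d2 x <= F d1 x.
Proof. by move=> psi_le; rewrite lerD2r lerD2l; apply: ler_sum => s _; exact: psi_le. Qed.

Lemma F_delta_cvg (delta : nat -> R) lambda x :
  (forall s t, psi s (delta k) t @[k --> \oo] --> lambda * chi_nz t) ->
  F (delta k) x @[k --> \oo] --> F_zero Phi H y V0 V c lambda x.
Proof.
move=> psi_cvg; rewrite /F_delta /F_zero mulr_sumr.
apply: cvgD; last exact: cvg_cst.
apply: cvgD; first exact: cvg_cst.
by apply: cvg_big => [|s _]; [exact: add_continuous|exact: psi_cvg].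
Qed.

End RegularizedCriteria.

Unset Implicit Arguments.

Theorem proposition2 (R : realType) (N Q S : nat) (P : 'I_S -> nat) (M0 : nat)
  (H : 'M[R]_(Q, N)) (y : 'cV[R]_Q) (V0 : 'M[R]_(M0, N))
  (V : forall s : 'I_S, 'M[R]_(P s, N)) (c : forall s : 'I_S, 'cV[R]_(P s))
  (Phi : 'cV[R]_Q -> R) (psi : 'I_S -> R -> R -> R) (lambda : R)
  (delta : nat -> R) :
  (1 <= N)%N -> (1 <= Q)%N -> (1 <= S)%N ->
  (forall s, (1 <= P s)%N) ->
  H != 0 ->
  (* (a) *)
  continuous Phi -> coercive Phi ->
  (* (b) *)
  (forall s d, 0 < d -> continuous (psi s d) /\ (forall t, 0 <= psi s d t)) ->
  (* (c) *)
  (forall x : 'cV[R]_N, H *m x = 0 -> V0 *m x = 0 -> x = 0) ->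
  (* (d) *)
  (forall s d1 d2, 0 < d1 -> d1 <= d2 -> forall t, psi s d2 t <= psi s d1 t) ->
  (* (e) *)
  0 < lambda ->
  (forall s t, psi s d t @[d --> 0^'+] --> lambda * chi_nz t) ->
  (* the sequence delta_n *)
  (forall n, 0 < delta n) ->
  (forall n m, (n <= m)%N -> delta m <= delta n) ->
  delta @ \oo --> 0 ->
  let F := @F_delta R N Q S P M0 Phi H y V0 V c psi in
  let F0 := @F_zero R N Q S P M0 Phi H y V0 V c lambda in
  (* (i) *)
  (fun n => inf_fun (F (delta n))) @ \oo --> inf_fun F0 /\
  forall xhat : nat -> 'cV[R]_N,
    (forall n, is_minimizer (F (delta n)) (xhat n)) ->
    (* (ii) *)
    (exists B : R, forall n, enorm (xhat n) <= B) /\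
    (forall x, cluster (xhat @ \oo) x -> is_minimizer F0 x) /\
    (* (iii) *)
    (forall xt, is_minimizer F0 xt ->
       (forall z, is_minimizer F0 z -> z = xt) ->
       xhat @ \oo --> xt).
Proof.
move=> _ _ _ _ _ Phi_cont Phi_coer psi_cont_ge0 HV0_inj psi_antitone _ psi_lim
  delta_gt0 delta_noninc delta_cvg F F0.
have F_cont k : continuous (F (delta k)).
  by apply: F_delta_continuous Phi_cont _ => s; exact: (psi_cont_ge0 s _ (delta_gt0 k)).1.
have F_nondecr x : nondecreasing_seq (fun k => F (delta k) x).
  move=> k k' kk'; apply: F_delta_le => s t.
  by apply: psi_antitone; [exact: delta_gt0|exact: delta_noninc].
have F_cvg x : F (delta k) x @[k --> \oo] --> F0 x.
  apply: F_delta_cvg => s t.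
  exact: (cvg_at_rightP _ _ _).1 (psi_lim s t) delta (conj delta_gt0 delta_cvg).
have F0_level_bounded : level_bounded (F (delta 0%N)).
  apply: level_bounded_le _ (fidelity_level_bounded y Phi_cont Phi_coer HV0_inj).
  by move=> x; apply: fidelity_le_F_delta => s t; exact: (psi_cont_ge0 s _ (delta_gt0 0%N)).2.
split; first exact: inf_fun_cvg F_cont F_nondecr F_cvg F0_level_bounded.
move=> xhat xhat_min; split; [|split].
- exact: minimizers_bounded F_nondecr F_cvg F0_level_bounded xhat xhat_min.
- exact: cluster_minimizer F_cont F_nondecr F_cvg xhat xhat_min.
- exact: minimizers_cvg F_cont F_nondecr F_cvg F0_level_bounded xhat xhat_min.
Qed.
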